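(* Let $R$ be a commutative ring and work in the category $\mathrm{Mod}(R)$ of $R$-modules. If $\mathfrak{p}$ is a prime ideal of $R$, then $R/\mathfrak{p}$ is spectral. Every spectral object of $\mathrm{Mod}(R)$ is equivalent to $R/\mathfrak{p}$ for some prime ideal $\mathfrak{p}$. For prime ideals $\mathfrak{p},\mathfrak{q}$ we have $R/\mathfrak{p} \prec R/\mathfrak{q}$ if and only if $\mathfrak{q} \subseteq \mathfrak{p}$, and $R/\mathfrak{p} \approx R/\mathfrak{q}$ if and only if $\mathfrak{p} = \mathfrak{q}$. Hence the map $\mathrm{Spec}(R) \to \mathrm{Spec}(\mathrm{Mod}(R))$, $\mathfrak{p} \mapsto [R/\mathfrak{p}]$, is a bijection.
   Context: Let $\mathcal{A}$ be an abelian category satisfying AB5 (cocomplete with exact directed colimits). For $M,N\in\mathcal{A}$, write $M \prec N$ if $M$ is a subquotient of a direct sum of (possibly infinitely many) copies of $N$; write $M \approx N$ (''equivalent'') if $M\prec N$ and $N \prec M$. Let $[M] := \{N \in \mathcal{A} : N \prec M\}$. An object $M$ is spectral if $M \neq 0$ and $M \prec N$ for every nonzero subobject $N \subseteq M$. $\mathrm{Spec}(\mathcal{A})$ denotes the collection of all $[M]$ with $M$ spectral. *)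

From HB Require Import structures.
From mathcomp Require Import all_boot all_order all_algebra.
From mathcomp Require Import generic_quotient ring_quotient.
From Stdlib Require Lists.List.
Set Implicit Arguments. Unset Strict Implicit. Unset Printing Implicit Defensive.
Import GRing.Theory.
Local Open Scope ring_scope.
Local Open Scope quotient_scope.

Section QuotMod.
Variables (R : comNzRingType) (p : prime_idealr R).

Definition quotR := {ideal_quot p}.
HB.instance Definition _ := GRing.ComNzRing.on quotR.

Definition qscale (r : R) (x : quotR) : quotR := (\pi_quotR r) * x.

Lemma qscaleA a b v : qscale a (qscale b v) = qscale (a * b) v.
Proof. by rewrite /qscale rmorphM mulrA. Qed.
Lemma qscale1 : left_id 1 qscale.
Proof. by move=> v; rewrite /qscale rmorph1 mul1r. Qed.
Lemma qscaleDr : right_distributive qscale +%R.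
Proof. by move=> a u v; rewrite /qscale mulrDr. Qed.
Lemma qscaleDl v : {morph qscale^~ v : a b / a + b}.
Proof. by move=> a b; rewrite /qscale rmorphD mulrDl. Qed.

HB.instance Definition _ :=
  GRing.Zmodule_isLmodule.Build R quotR qscaleA qscale1 qscaleDr qscaleDl.

Definition RmodP : lmodType R := quotR.
End QuotMod.

Section Prec.
Variable R : comNzRingType.

Definition fin_supp (I : Type) (V : zmodType) (x : I -> V) : Prop :=
  exists s : seq I, forall i, ~ Stdlib.Lists.List.In i s -> x i = 0.

Definition submodule (V : lmodType R) (S : V -> Prop) : Prop :=
  [/\ S 0, (forall u v, S u -> S v -> S (u + v)) & (forall (r : R) u, S u -> S (r *: u))].

(* A is a submodule of the direct sum (+)_{i:I} S of copies of the submodule S of V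
   (elements of the direct sum = finitely supported families with values in S) *)
Definition dsum_submodule (V : lmodType R) (S : V -> Prop) (I : Type)
    (A : (I -> V) -> Prop) : Prop :=
  [/\ (forall x, A x -> fin_supp x /\ (forall i, S (x i))),
      A (fun _ => 0),
      (forall x y, A x -> A y -> A (fun i => x i + y i)) &
      (forall (r : R) x, A x -> A (fun i => r *: x i))].

(* M is a subquotient of a direct sum of copies of the module S (a submodule of V):
   there is a submodule A of (+)_I S and an R-linear surjection A ->> M
   (so M ≅ A / ker). *)
Definition subquot_sum (M V : lmodType R) (S : V -> Prop) : Prop :=
  exists (I : Type) (A : (I -> V) -> Prop) (f : (I -> V) -> M),
    [/\ dsum_submodule S A,
        (forall x y, A x -> A y -> f (fun i => x i + y i) = f x + f y),
        (forall (r : R) x, A x -> f (fun i => r *: x i) = r *: f x) &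
        (forall m : M, exists x, A x /\ f x = m)].

Definition prec (M N : lmodType R) : Prop := subquot_sum M (fun _ : N => True).

Definition equiv_mod (M N : lmodType R) : Prop := prec M N /\ prec N M.

Definition cls (M : lmodType R) : lmodType R -> Prop := fun N => prec N M.

Definition spectral (M : lmodType R) : Prop :=
  (exists m : M, m <> 0) /\
  (forall S : M -> Prop, submodule S -> (exists m, S m /\ m <> 0) -> subquot_sum M S).

End Prec.

(* Since R/p is a domain, every nonzero submodule of R/p contains the copy
   (R/p) s of R/p, so R/p is spectral.  If M is spectral, every r killing a
   nonzero v in M kills M, as M is a subquotient of a sum of copies of Rv;
   hence the annihilator p of any m <> 0 is prime and R/p ~ Rm, giving M ~ R/p.
   Finally R/p < R/q forces q to kill R/p, i.e. q <= p, and conversely R/q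
   maps onto R/p when q <= p. *)

From HB Require Import structures.
From mathcomp Require Import all_boot all_order all_algebra.
From mathcomp Require Import generic_quotient ring_quotient.
From Stdlib Require Import ClassicalEpsilon FunctionalExtensionality PropExtensionality Classical_Prop.
From Stdlib Require Lists.List.
Set Implicit Arguments. Unset Strict Implicit. Unset Printing Implicit Defensive.
Import GRing.Theory.
Local Open Scope ring_scope.
Local Open Scope quotient_scope.

Lemma inj_has_left_inverse (A B : Type) (a0 : A) (f : A -> B) :
  injective f -> exists g : B -> A, cancel f g.
Proof.
move=> finj.
have [g gK] : exists g : B -> A, forall b, (exists a, f a = b) -> f (g b) = b.
  apply: (choice (fun b a => (exists a, f a = b) -> f a = b)) => b.
  case: (classic (exists a, f a = b)) => [[a fa] | no_preimage]; first by exists a.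
  by exists a0 => /no_preimage.
by exists g => a; apply: finj; apply: gK; exists a.
Qed.

Section Subquotients.
Variable R : comNzRingType.

Lemma scalable_map0 (U V : lmodType R) (phi : U -> V) : scalable phi -> phi 0 = 0.
Proof. by move=> phiZ; rewrite -(scale0r (0 : U)) phiZ scale0r. Qed.

Lemma subquot_map0 (M V : lmodType R) (I : Type) (A : (I -> V) -> Prop)
    (f : (I -> V) -> M) :
  A (fun _ => 0) -> (forall (r : R) x, A x -> f (fun i => r *: x i) = r *: f x) ->
  f (fun _ => 0) = 0.
Proof.
move=> A0 fZ; rewrite -(scale0r (f (fun _ => 0))) -fZ //.
by congr f; apply: functional_extensionality => i; rewrite scale0r.
Qed.

Lemma subquot_sum_embed (M V : lmodType R) (S : V -> Prop) (phi : M -> V) :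
  {morph phi : a b / a + b} -> scalable phi -> injective phi ->
  (forall m, S (phi m)) -> subquot_sum M S.
Proof.
move=> phiD phiZ phiI phiS; have [psi phiK] := inj_has_left_inverse 0 phiI.
exists unit, (fun x => exists m, x = fun _ => phi m), (fun x => psi (x tt)); split.
- split.
  + by move=> x [m ->]; split => //; exists [:: tt] => -[] []; left.
  + by exists 0; apply: functional_extensionality => _; rewrite (scalable_map0 phiZ).
  + move=> _ _ [a ->] [b ->]; exists (a + b).
    by apply: functional_extensionality => _; rewrite phiD.
  + move=> r _ [a ->]; exists (r *: a).
    by apply: functional_extensionality => _; rewrite phiZ.
- by move=> _ _ [a ->] [b ->]; rewrite -phiD !phiK.
- by move=> r _ [a ->]; rewrite -phiZ !phiK.
- by move=> m; exists (fun _ => phi m); split; [exists m | rewrite phiK].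
Qed.

Lemma prec_refl (M : lmodType R) : prec M M.
Proof. exact: (@subquot_sum_embed M M _ id). Qed.

Lemma subquot_sum_pull (M V W : lmodType R) (S : V -> Prop) (T : W -> Prop)
    (phi : W -> V) :
  {morph phi : a b / a + b} -> scalable phi -> injective phi ->
  (forall v, S v -> exists2 w, T w & phi w = v) ->
  subquot_sum M S -> subquot_sum M T.
Proof.
move=> phiD phiZ phiI hST [I [A [f [[hA A0 AD AZ] fD fZ fS]]]].
have [psi phiK] := inj_has_left_inverse 0 phiI.
have phiD_fun (x y : I -> W) :
    (fun i => phi (x i + y i)) = (fun i => phi (x i) + phi (y i)).
  by apply: functional_extensionality => i; rewrite phiD.
have phiZ_fun (r : R) (x : I -> W) :
    (fun i => phi (r *: x i)) = (fun i => r *: phi (x i)).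
  by apply: functional_extensionality => i; rewrite phiZ.
exists I, (fun y => A (fun i => phi (y i))), (fun y => f (fun i => phi (y i))); split.
- split.
  + move=> y /hA [[s ys] yS]; split.
      by exists s => i /ys; rewrite -(scalable_map0 phiZ); exact: phiI.
    by move=> i; have [w Tw /phiI <-] := hST _ (yS i).
  + have -> // : (fun _ : I => phi 0) = (fun _ => 0).
    by apply: functional_extensionality => _; exact: scalable_map0.
  + by move=> x y Ax Ay; rewrite phiD_fun; exact: AD.
  + by move=> r x Ax; rewrite phiZ_fun; exact: AZ.
- by move=> x y Ax Ay; rewrite phiD_fun; exact: fD.
- by move=> r x Ax; rewrite phiZ_fun; exact: fZ.
- move=> m; have [x [Ax <-]] := fS m.
  have phiKx : (fun i => phi (psi (x i))) = x.
    apply: functional_extensionality => i.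
    by have [w _ <-] := hST _ (proj2 (hA _ Ax) i); rewrite phiK.
  by exists (fun i => psi (x i)); rewrite phiKx.
Qed.

Lemma subquot_sum_epi (M M' V : lmodType R) (S : V -> Prop) (h : M -> M') :
  {morph h : a b / a + b} -> scalable h -> (forall b, exists a, h a = b) ->
  subquot_sum M S -> subquot_sum M' S.
Proof.
move=> hD hZ hS [I [A [f [hA fD fZ fS]]]].
exists I, A, (fun x => h (f x)); split => //.
- by move=> x y Ax Ay; rewrite fD // hD.
- by move=> r x Ax; rewrite fZ // hZ.
- by move=> b; have [a <-] := hS b; have [x [Ax <-]] := fS a; exists x.
Qed.

Lemma subquot_sum_annihilated (M V : lmodType R) (S : V -> Prop) (r : R) :
  subquot_sum M S -> (forall v, S v -> r *: v = 0) -> forall m : M, r *: m = 0.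
Proof.
move=> [I [A [f [[hA A0 _ AZ] _ fZ fS]]]] rS m.
have [x [Ax <-]] := fS m; rewrite -fZ //.
have -> : (fun i => r *: x i) = (fun _ => 0).
  by apply: functional_extensionality => i; apply: rS; exact: (proj2 (hA _ Ax)).
exact: subquot_map0 A0 fZ.
Qed.

Lemma fin_supp_lift (M V : lmodType R) (I J : Type) (B : (J -> V) -> Prop)
    (g : (J -> V) -> M) (x : I -> M) :
  (forall y, B y -> fin_supp y) -> B (fun _ => 0) -> g (fun _ => 0) = 0 ->
  (forall m, exists y, B y /\ g y = m) -> fin_supp x ->
  exists Y : I -> J -> V,
    [/\ fin_supp (fun z => Y z.1 z.2), forall i, B (Y i) & forall i, g (Y i) = x i].
Proof.
move=> Bfs B0 g0 gS [s xs].
(* lifting zeros by zeros keeps the lifted family finitely supported *)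
have [Y hY] : exists Y : I -> J -> V,
    forall i, [/\ B (Y i), g (Y i) = x i & (x i = 0 -> Y i = fun _ => 0)].
  apply: (choice (fun i y => [/\ B y, g y = x i & (x i = 0 -> y = fun _ => 0)])) => i.
  case: (classic (x i = 0)) => [xi0 | xi_neq0]; first by exists (fun _ => 0); rewrite xi0.
  by have [y [By gy]] := gS (x i); exists y; split=> // /xi_neq0.
have [L YL] : exists L : I -> seq J, forall i j, ~ List.In j (L i) -> Y i j = 0.
  apply: (choice (fun i l => forall j, ~ List.In j l -> Y i j = 0)) => i.
  by have [BY _ _] := hY i; exact: Bfs.
exists Y; split=> [|i|i]; [|by case: (hY i)..].
exists (List.flat_map (fun i => List.map (fun j => (i, j)) (L i)) s) => -[i j] /= hij.
case: (classic (List.In i s)) => [si | /xs xi0]; last by case: (hY i) => _ _ ->.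
apply: YL => Lj; apply: hij; apply/List.in_flat_map; exists i; split => //.
exact: List.in_map.
Qed.

Lemma subquot_sum_trans (N M V : lmodType R) (S : V -> Prop) :
  prec N M -> subquot_sum M S -> subquot_sum N S.
Proof.
move=> [I [A [f [[hA A0 AD AZ] fD fZ fS]]]] [J [B [g [[hB B0 BD BZ] gD gZ gS]]]].
have gD_fun (x y : I * J -> V) :
    (forall i, B (fun j => x (i, j))) -> (forall i, B (fun j => y (i, j))) ->
    (fun i => g (fun j => x (i, j) + y (i, j))) =
    (fun i => g (fun j => x (i, j)) + g (fun j => y (i, j))).
  by move=> xB yB; apply: functional_extensionality => i; apply: gD.
have gZ_fun (r : R) (x : I * J -> V) : (forall i, B (fun j => x (i, j))) ->
    (fun i => g (fun j => r *: x (i, j))) = (fun i => r *: g (fun j => x (i, j))).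
  by move=> xB; apply: functional_extensionality => i; apply: gZ.
exists (I * J)%type,
  (fun z => [/\ fin_supp z, forall i, B (fun j => z (i, j))
                          & A (fun i => g (fun j => z (i, j)))]),
  (fun z => f (fun i => g (fun j => z (i, j)))); split.
- split.
  + by move=> z [zfs zB _]; split=> // -[i j]; exact: (proj2 (hB _ (zB i))).
  + split=> //; first by exists [::].
    by rewrite (subquot_map0 B0 gZ).
  + move=> x y [xfs xB xA] [yfs yB yA]; split; last by rewrite gD_fun //; exact: AD.
    * case: xfs yfs => [s1 h1] [s2 h2]; exists (s1 ++ s2) => z z12.
      by rewrite h1 ?h2 ?addr0 // => zs; apply: z12; apply: List.in_or_app; tauto.
    * by move=> i; exact: BD.
  + move=> r x [xfs xB xA]; split; last by rewrite gZ_fun //; exact: AZ.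
    * by case: xfs => [s h]; exists s => z /h ->; rewrite scaler0.
    * by move=> i; exact: BZ.
- by move=> x y [_ xB xA] [_ yB yA]; rewrite gD_fun //; exact: fD.
- by move=> r x [_ xB xA]; rewrite gZ_fun //; exact: fZ.
- move=> n; have [x [Ax <-]] := fS n.
  have [Y [Yfs YB gY]] := fin_supp_lift (fun y By => proj1 (hB y By)) B0
    (subquot_map0 B0 gZ) gS (proj1 (hA _ Ax)).
  have gYx : (fun i => g (fun j => Y i j)) = x by apply: functional_extensionality.
  by exists (fun z => Y z.1 z.2); rewrite /= gYx.
Qed.

End Subquotients.

Section QuotientByPrime.
Variables (R : comNzRingType) (p : prime_idealr R).
Local Notation pi := (\pi_(quotR p)).

Lemma quotR_pi_eq0 (a : R) : (pi a == 0 :> quotR p) = (a \in p).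
Proof. by rewrite -(rmorph0 pi) -(@Quotient.idealrBE _ p) subr0. Qed.

Lemma RmodP_scaleE (r : R) (x : RmodP p) : r *: x = pi r * (x : quotR p).
Proof. by []. Qed.

Lemma quotR_mulIf (s : quotR p) : s != 0 -> injective ( *%R^~ s).
Proof.
move=> s_neq0 a b abs; apply/eqP; rewrite -subr_eq0.
have /Quotient.rquot_IdomainAxiom : (a - b) * s = 0 by rewrite mulrBl abs subrr.
by rewrite (negPf s_neq0) orbF.
Qed.

Section QuotLift.
Variables (W : lmodType R) (g : R -> W).
Hypotheses (gD : {morph g : a b / a + b}) (gZ : forall r a, g (r * a) = r *: g a).
Hypothesis gp : {in p, forall a, g a = 0}.

(* independent of the representative because g vanishes on p *)
Definition quot_lift (x : RmodP p) : W := g (repr (x : quotR p)).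

Lemma quot_liftE (a : R) : quot_lift (pi a) = g a.
Proof.
have : repr (pi a : quotR p) - a \in p.
  by rewrite (@Quotient.idealrBE _ p) reprK.
by move=> /gp ga0; rewrite /quot_lift -[repr _](subrK a) gD ga0 add0r.
Qed.

Lemma quot_liftD : {morph quot_lift : x y / x + y}.
Proof.
by move=> x y; rewrite -[x]reprK -[y]reprK -rmorphD !quot_liftE gD.
Qed.

Lemma quot_liftZ : scalable quot_lift.
Proof.
by move=> r x; rewrite RmodP_scaleE -[x]reprK -rmorphM !quot_liftE gZ.
Qed.

Lemma quot_lift_inj : {in predC p, forall a, g a != 0} -> injective quot_lift.
Proof.
move=> gI x y; rewrite -[x]reprK -[y]reprK !quot_liftE => gxy.
apply/eqP; rewrite -(@Quotient.idealrBE _ p); apply: contraT => /gI.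
have : g (repr x - repr y) + g (repr y) = 0 + g (repr y).
  by rewrite -gD subrK gxy add0r.
by move/addIr ->; rewrite eqxx.
Qed.

End QuotLift.

Lemma RmodP_spectral : spectral (RmodP p).
Proof.
split; first by exists 1; apply/eqP; exact: oner_neq0.
move=> S [_ _ SZ] [s [Ss /eqP s_neq0]].
apply: (@subquot_sum_embed _ _ _ _ (fun c : RmodP p => (c : quotR p) * s)).
- by move=> a b; rewrite mulrDl.
- by move=> r a; rewrite !RmodP_scaleE mulrA.
- exact: quotR_mulIf.
- by move=> c; rewrite -[c]reprK -RmodP_scaleE; exact: SZ.
Qed.

End QuotientByPrime.

Lemma prec_RmodP (R : comNzRingType) (p q : prime_idealr R) :
  prec (RmodP p) (RmodP q) <-> {subset q <= p}.
Proof.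
split=> [pq r rq | qp].
- have /eqP rq0 : \pi_(quotR q) r == 0 by rewrite quotR_pi_eq0.
  have r_kills_q (v : RmodP q) : r *: v = 0 by rewrite RmodP_scaleE rq0 mul0r.
  have := subquot_sum_annihilated pq (fun v _ => r_kills_q v) 1.
  by rewrite RmodP_scaleE mulr1 => /eqP; rewrite quotR_pi_eq0.
- pose g (a : R) : RmodP p := \pi_(quotR p) a.
  have gD : {morph g : a b / a + b} by move=> a b; exact: rmorphD.
  have gZ (r a : R) : g (r * a) = r *: g a by rewrite /g rmorphM.
  have gq : {in q, forall a, g a = 0} by move=> a /qp; rewrite -quotR_pi_eq0 => /eqP.
  apply: (@subquot_sum_epi _ (RmodP q) _ _ _ (quot_lift g) _ _ _ (prec_refl _)).
  - exact: quot_liftD.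
  - exact: quot_liftZ.
  - by move=> b; exists (\pi_(quotR q) (repr (b : quotR p))); rewrite quot_liftE // /g reprK.
Qed.

Definition prime_idealr_of (R : comNzRingType) (S : pred R)
    (S_ideal : idealr_closed S) (S_prime : prime_idealr_closed S) : prime_idealr R :=
  HB.pack S (isIdealr.Build R S S_ideal) (isPrimeIdealrClosed.Build R S S_prime).

Section SpectralModule.
Variables (R : comNzRingType) (M : lmodType R).
Hypothesis M_spectral : spectral M.

Lemma submodule_cyclic (v : M) : submodule (fun u => exists a : R, u = a *: v).
Proof.
split.
- by exists 0; rewrite scale0r.
- by move=> _ _ [a ->] [b ->]; exists (a + b); rewrite scalerDl.
- by move=> r _ [a ->]; exists (r * a); rewrite scalerA.
Qed.

(* M is a subquotient of sums of copies of Rv, and r kills Rv *)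
Lemma spectral_annihilator (v : M) (r : R) :
  v <> 0 -> r *: v = 0 -> forall w : M, r *: w = 0.
Proof.
move=> v_neq0 rv; have [_ MS] := M_spectral.
apply: (subquot_sum_annihilated (MS _ (submodule_cyclic v) _)).
- by exists v; split=> //; exists 1; rewrite scale1r.
- by move=> _ [a ->]; rewrite scalerA mulrC -scalerA rv scaler0.
Qed.

Variable m : M.
Hypothesis m_neq0 : m <> 0.

Definition ann : pred R := fun r => r *: m == 0.

Lemma ann_idealr_closed : idealr_closed ann.
Proof.
split; rewrite ?unfold_in /ann ?scale0r ?scale1r //; first exact/eqP.
move=> a u v; rewrite !unfold_in /ann => /eqP um /eqP vm.
by rewrite scalerDl -scalerA um vm scaler0 addr0.
Qed.

Lemma ann_prime_closed : prime_idealr_closed ann.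
Proof.
move=> u v; rewrite !unfold_in /ann => /eqP uvm.
have [// | /eqP um_neq0] := eqVneq (u *: m) 0.
by apply/eqP; apply: (spectral_annihilator um_neq0); rewrite scalerA mulrC.
Qed.

Definition ann_prime : prime_idealr R :=
  prime_idealr_of ann_idealr_closed ann_prime_closed.

(* R/ann(m) is isomorphic to Rm, which is a nonzero submodule of M *)
Lemma spectral_equiv_ann : equiv_mod M (RmodP ann_prime).
Proof.
pose g (a : R) : M := a *: m.
have gD : {morph g : a b / a + b} by move=> a b; exact: scalerDl.
have gZ (r a : R) : g (r * a) = r *: g a by rewrite /g scalerA.
have gp : {in ann_prime, forall a, g a = 0} by move=> a /eqP.
have gI : {in predC ann_prime, forall a, g a != 0} by [].
have liftD := quot_liftD gD gp; have liftZ := quot_liftZ gD gZ gp.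
have liftI := quot_lift_inj gD gp gI.
split.
- apply: (subquot_sum_pull liftD liftZ liftI (S := fun u => exists a : R, u = a *: m)
    (T := fun _ => True)).
    by move=> _ [a ->]; exists (\pi_(quotR ann_prime) a); rewrite // quot_liftE.
  apply: M_spectral.2; first exact: submodule_cyclic.
  by exists m; split=> //; exists 1; rewrite scale1r.
- exact: subquot_sum_embed liftD liftZ liftI _.
Qed.

End SpectralModule.

Lemma spectral_equiv_RmodP (R : comNzRingType) (M : lmodType R) :
  spectral M -> exists p : prime_idealr R, equiv_mod M (RmodP p).
Proof.
move=> M_spectral; have [m m_neq0] := M_spectral.1.
by exists (ann_prime M_spectral m_neq0); exact: spectral_equiv_ann.
Qed.

Lemma equiv_RmodP (R : comNzRingType) (p q : prime_idealr R) :
  equiv_mod (RmodP p) (RmodP q) <-> p =i q.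
Proof.
rewrite /equiv_mod !prec_RmodP; split=> [[qp pq] r | pq].
- by apply/idP/idP; [exact: pq | exact: qp].
- by split=> r; rewrite pq.
Qed.

Lemma cls_equiv (R : comNzRingType) (M N : lmodType R) :
  equiv_mod M N -> cls M = cls N.
Proof.
move=> [MN NM]; apply: functional_extensionality => P.
by apply: propositional_extensionality; split=> ?; apply: subquot_sum_trans; eassumption.
Qed.

Theorem proposition2p5 (R : comNzRingType) :
  (forall p : prime_idealr R, spectral (RmodP p)) /\
  (forall M : lmodType R, spectral M -> exists p : prime_idealr R, equiv_mod M (RmodP p)) /\
  (forall p q : prime_idealr R, prec (RmodP p) (RmodP q) <-> {subset q <= p}) /\
  (forall p q : prime_idealr R, equiv_mod (RmodP p) (RmodP q) <-> p =i q) /\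
  ((forall p q : prime_idealr R, cls (RmodP p) = cls (RmodP q) -> p =i q) /\
   (forall M : lmodType R, spectral M -> exists p : prime_idealr R, cls M = cls (RmodP p))).
Proof.
split; first exact: RmodP_spectral.
split; first exact: spectral_equiv_RmodP.
split; first exact: prec_RmodP.
split; first exact: equiv_RmodP.
split=> [p q pq | M M_spectral].
- apply/equiv_RmodP; split.
  + by change (cls (RmodP q) (RmodP p)); rewrite -pq; exact: prec_refl.
  + by change (cls (RmodP p) (RmodP q)); rewrite pq; exact: prec_refl.
- have [p Mp] := spectral_equiv_RmodP M_spectral.
  by exists p; exact: cls_equiv.
Qed.
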